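(* Let $\{p_\alpha\}$ be a one-parameter exponential family on $\mathbb{R}$ with canonical parameter $\alpha$, sufficient statistic $x$, base measure $p_0$, i.e. $\frac{dp_\alpha}{dp_0}(x)=\exp(\alpha x-\Phi(\alpha))$ with $\Phi(0)=0$, where $\Phi$ is smooth and finite on $\mathbb{R}$ and $\Phi''(0)\neq 0$. Consider the model in which, given $X\in\mathbb{R}_{>0}^{m\times n}$ and $u\in\mathbb{R}^m$, $v\in\mathbb{R}^n$, independently $Y_{ij}\sim p_{\alpha_{ij}}$ with $\alpha_{ij}=u_i+\log X_{ij}-v_j$, with log-likelihood $L(u,v;Y)=\sum_iu_ip_i-\sum_jv_jq_j-\sum_{ij}\Phi(u_i+w_{ij})+C(Y)$ where $p_i=\sum_jY_{ij}$, $q_j=\sum_iY_{ij}$, $w_{ij}=\log X_{ij}-v_j$. Suppose the MLE satisfies a generalized proportional fitting equation for all parameters, in the sense that there are smooth functions $f,h:\mathbb{R}\to\mathbb{R}$ with $$h(u_i)\sum_j f(w_{ij})=\sum_j\Phi'(u_i+w_{ij})\quad\text{for all } u_i\in\mathbb{R}\text{ and all } (w_{ij})_j\in\mathbb{R}^n$$ (equivalently, $\partial_{u_i}L=0$ iff $h(u_i)=p_i/\sum_jf(w_{ij})$). Then there exist constants $a,b\in\mathbb{R}$ with $\Phi(\alpha)=e^{a\alpha+b}-e^b$ for all $\alpha$; i.e. $p_\alpha$ is the law of $aZ$ with $Z\sim\mathrm{Poisson}(e^{a\alpha+b})$ (a scaled Poisson family). Conversely, scaled Poisson families satisfy such an equation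 (with $f=h=\exp$ in the unscaled case, recovering the IPF equations). *)

From mathcomp Require Import all_boot all_order all_algebra.
From mathcomp Require Import all_classical all_reals all_analysis.
Set Implicit Arguments. Unset Strict Implicit. Unset Printing Implicit Defensive.
Import Order.TTheory GRing.Theory Num.Theory.
Local Open Scope ring_scope.

Definition log_partition (R : realType) (p0 : {measure set R -> \bar R})
  (alpha : R) : R :=
  ln (fine (\int[p0]_x (expR (alpha * x))%:E)%E).

Definition smooth_fun (R : realType) (f : R -> R) : Prop :=
  forall (k : nat) (x : R), derivable (derive1n k f) x 1.

From mathcomp Require Import all_boot all_order all_algebra.
From mathcomp Require Import all_classical all_reals all_analysis.
From mathcomp Require Import ring lra.
Import Order.TTheory GRing.Theory Num.Theory.
Local Open Scope ring_scope.

(* Specialising the equation to constant [w] gives [h u * f c = Phi'(u + c)],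
   so [g := Phi'] satisfies [g (x + y) * g 0 = g x * g y].  Differentiating in
   [y] at [0] yields the linear ODE [g' = lam * g] with [lam = g'(0) / g(0)],
   hence [Phi x = K * (expR (lam * x) - 1)].  That [K > 0] is forced by the
   log-convexity of the moment generating function: [Phi 1 + Phi (-1) >= 0]. *)

Section RealDerivatives.
Variable R : realType.
Local Set Implicit Arguments.
Local Unset Strict Implicit.
Implicit Types (F g dg : R -> R) (c lam x : R).

Lemma smooth_is_derive F x : smooth_fun F -> is_derive x 1 F (derive1 F x).
Proof. by move=> sF; have /derivableP := sF 0%N x; rewrite derive1n0 derive1E. Qed.

Lemma derive1_val {F x df} : is_derive x 1 F df -> derive1 F x = df.
Proof. by move=> dF; rewrite derive1E; exact: (@derive_val _ _ _ _ _ _ _ dF). Qed.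

Lemma smooth_derive1 F : smooth_fun F -> smooth_fun (derive1 F).
Proof. by move=> sF k x; rewrite -derive1Sn; exact: sF. Qed.

Lemma is_derive_scale_expR c lam x :
  is_derive x 1 (fun y => c * expR (lam * y)) (c * lam * expR (lam * x)).
Proof. by apply: trigger_derive; rewrite /GRing.scale /=; ring. Qed.

Lemma derive1_scale_expR c lam :
  derive1 (fun y => c * expR (lam * y)) = fun x => c * lam * expR (lam * x).
Proof. by apply/funext => x; exact/derive1_val/is_derive_scale_expR. Qed.

Lemma smooth_scale_expR c lam : smooth_fun (fun y => c * expR (lam * y)).
Proof.
have dnE k : derive1n k (fun y => c * expR (lam * y))
           = fun y => c * lam ^+ k * expR (lam * y).
  elim: k => [|k IHk]; first by apply/funext => y; rewrite expr0 mulr1.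
  by rewrite derive1nS IHk derive1_scale_expR; apply/funext => y; rewrite exprS; ring.
by move=> k x; rewrite dnE; case: (is_derive_scale_expR (c * lam ^+ k) lam x).
Qed.

Lemma linear_ode_solution g lam :
  (forall x, is_derive x 1 g (lam * g x)) -> forall x, g x = g 0 * expR (lam * x).
Proof.
move=> dg x; pose q y := g y * expR (- lam * y).
have dq (y : R) : is_derive y 1 q 0.
  have dgy := dg y.
  by apply: trigger_derive; rewrite /GRing.scale /=; ring.
have := is_derive_0_is_cst x 0 dq; rewrite /q mulr0 expR0 mulr1 => <-.
by rewrite -mulrA -expRD mulNr addNr expR0 mulr1.
Qed.

Lemma antiderivative_scale_expR F c lam : lam != 0 ->
  (forall x, is_derive x 1 F (c * expR (lam * x))) ->
  forall x, F x = F 0 + c / lam * (expR (lam * x) - 1).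
Proof.
move=> lam0 dF x; pose q y := F y - c / lam * expR (lam * y).
have dq (y : R) : is_derive y 1 q 0.
  have dexp := is_derive_scale_expR (c / lam) lam y; have dFy := dF y.
  by apply: trigger_derive; rewrite /GRing.scale /=; field.
have := is_derive_0_is_cst x 0 dq; rewrite /q mulr0 expR0 => qE.
by move: qE; rewrite mulrBr mulr1; lra.
Qed.

(* The multiplicative Cauchy equation in a form that does not presuppose [g 0 = 1]. *)
Lemma cauchy_eq_scale_expR g dg :
  (forall x, is_derive x 1 g (dg x)) -> dg 0 != 0 ->
  (forall x y, g (x + y) * g 0 = g x * g y) ->
  g 0 != 0 /\ forall x, g x = g 0 * expR (dg 0 / g 0 * x).
Proof.
move=> gD dg0 gM.
have dgM x : dg x * g 0 = g x * dg 0.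
  have shiftD : is_derive (0 : R) 1 (fun y => y + x) 1.
    by apply: trigger_derive; rewrite addr0.
  have gxD := @is_derive1_comp R g (fun y => y + x) 0 _ _ (gD (0 + x)) shiftD.
  have lhsD : is_derive (0 : R) 1 (fun y => g (y + x) * g 0) (dg x * g 0).
    by apply: trigger_derive; rewrite /GRing.scale /= !add0r mulr0 add0r mulr1 mulrC.
  have rhsD : is_derive (0 : R) 1 (fun y => g x * g y) (g x * dg 0).
    by apply: trigger_derive; rewrite /GRing.scale /=; ring.
  have eqLR : (fun y => g (y + x) * g 0) = (fun y => g x * g y).
    by apply/funext => y; rewrite addrC gM.
  by rewrite -(derive1_val lhsD) -(derive1_val rhsD) eqLR.
have g0 : g 0 != 0.
  apply/eqP => g00.
  have g_eq0 : g = cst 0.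
    apply/funext => x; apply/eqP; have := dgM x.
    by rewrite g00 mulr0 => /esym/eqP; rewrite mulf_eq0 (negbTE dg0) orbF.
  move/eqP: dg0; apply.
  by rewrite -(derive1_val (gD 0)) g_eq0 (derive1_val (is_derive_cst _ _ _)).
split=> //; apply: linear_ode_solution => x.
by apply: (is_derive_eq (gD x)); apply: (mulIf g0); rewrite dgM; field.
Qed.

End RealDerivatives.

Lemma sum_separable_eq {R : numDomainType} {n : nat} {f h g : R -> R} :
  (0 < n)%N ->
  (forall u (w : 'I_n -> R), h u * (\sum_(j < n) f (w j)) = \sum_(j < n) g (u + w j)) ->
  forall u c, h u * f c = g (u + c).
Proof.
move=> n_gt0 sepE u c; apply/eqP; rewrite -(eqr_pMn2r n_gt0) -mulrnAr.
by have := sepE u (fun=> c); rewrite !sumr_const card_ord => ->.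
Qed.

Lemma separable_cauchy_eq {R : comPzRingType} {f h g : R -> R} :
  (forall u c, h u * f c = g (u + c)) -> forall x y, g (x + y) * g 0 = g x * g y.
Proof.
move=> sepE x y.
have := sepE 0 0; have := sepE 0 x; have := sepE y 0; rewrite !addr0 !add0r.
by move=> <- <- <-; rewrite addrC -sepE; ring.
Qed.

Lemma separable_scale_expR {R : realType} {Phi f h : R -> R} :
  smooth_fun Phi -> derive1n 2 Phi 0 != 0 -> Phi 0 = 0 ->
  (forall u c, h u * f c = derive1 Phi (u + c)) ->
  exists K lam, [/\ K != 0, lam != 0 & forall x, Phi x = K * (expR (lam * x) - 1)].
Proof.
move=> sPhi d2Phi0 Phi0 sepE.
rewrite derive1nS derive1n1 in d2Phi0.
have [g0 gE] := cauchy_eq_scale_expR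
  (fun x => smooth_is_derive x (smooth_derive1 sPhi)) d2Phi0 (separable_cauchy_eq sepE).
set lam := _ / _ in gE.
have lam0 : lam != 0 by rewrite mulf_neq0 ?invr_eq0.
have PhiD (x : R) : is_derive x 1 Phi (derive1 Phi 0 * expR (lam * x)).
  by rewrite -gE; exact: smooth_is_derive.
exists (derive1 Phi 0 / lam), lam; split=> //; first by rewrite mulf_neq0 ?invr_eq0.
by move=> x; rewrite (antiderivative_scale_expR lam0 PhiD x) Phi0 add0r.
Qed.

(* The optimal [c] balances the two terms, [expR c * m1 = sqrt (m1 * m2)]. *)
Lemma ln_midpoint_le {R : realType} (m0 m1 m2 : R) : 0 < m0 -> 0 < m1 -> 0 < m2 ->
  (forall c, 2 * m0 <= expR c * m1 + expR (- c) * m2) -> 2 * ln m0 <= ln m1 + ln m2.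
Proof.
move=> m0_gt0 m1_gt0 m2_gt0.
set a := ln m1; set b := ln m2; move=> /(_ ((b - a) / 2)).
rewrite -(lnK m1_gt0) -(lnK m2_gt0) -!expRD -/a -/b.
have -> : (b - a) / 2 + a = (a + b) / 2 by field.
have -> : - ((b - a) / 2) + b = (a + b) / 2 by field.
move=> le_m0; have : m0 <= expR ((a + b) / 2) by lra.
by rewrite -{1}(lnK m0_gt0) ler_expR; lra.
Qed.

Definition mgf {R : realType} (p0 : {measure set R -> \bar R}) (t : R) : R :=
  fine (\int[p0]_x (expR (t * x))%:E)%E.

Section MomentGeneratingFunction.
Context {R : realType} (p0 : {measure set R -> \bar R}).
Hypothesis mgf_integrable :
  forall t : R, p0.-integrable setT (fun x => (expR (t * x))%:E).

Lemma mgfE t : (\int[p0]_x (expR (t * x))%:E)%E = (mgf p0 t)%:E.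
Proof. by rewrite fineK //; exact: integrable_fin_num. Qed.

Lemma mgf_ge0 t : 0 <= mgf p0 t.
Proof. by apply: fine_ge0; apply: integral_ge0 => x _; rewrite lee_fin expR_ge0. Qed.

(* [ln] vanishes on nonpositive arguments. *)
Lemma mgf_gt0 {t} : log_partition p0 t != 0 -> 0 < mgf p0 t.
Proof.
rewrite /log_partition -/(mgf p0 t) lt_neqAle mgf_ge0 andbT.
by apply: contra => /eqP <-; rewrite ln0.
Qed.

Lemma mgf0_gt0 {t} : 0 < mgf p0 t -> 0 < mgf p0 0.
Proof.
move=> mgft_gt0; rewrite lt_neqAle mgf_ge0 andbT; apply/negP => /eqP mgf0_eq0.
have p0T : p0 setT = 0%E.
  rewrite -[p0 setT]mul1e -integral_cst //; transitivity (mgf p0 0)%:E.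
    by rewrite -mgfE; apply: eq_integral => x _; rewrite mul0r expR0.
  by rewrite -mgf0_eq0.
move: mgft_gt0; rewrite /mgf (null_set_integral _ _ p0T) ?ltxx //.
exact: measurable_int (mgf_integrable t).
Qed.

(* Integrate the pointwise inequality [2 <= expR z + expR (- z)] at [z = c + t x]. *)
Lemma mgf_cosh_bound t c :
  2 * mgf p0 0 <= expR c * mgf p0 t + expR (- c) * mgf p0 (- t).
Proof.
have intZ r s := integrableZl measurableT r (mgf_integrable s).
rewrite -lee_fin EFinD !EFinM -!mgfE -!integralZl // -integralD //.
apply: le_integral => //; first exact: integrableD.
move=> x _; rewrite -!EFinM -EFinD lee_fin mul0r expR0 mulr1 -!expRD mulNr.
have := expR_ge1Dx (c + t * x); have := expR_ge1Dx (- c + - (t * x)); lra.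
Qed.

Lemma ln_mgf_midpoint t : 0 < mgf p0 t -> 0 < mgf p0 (- t) ->
  2 * ln (mgf p0 0) <= ln (mgf p0 t) + ln (mgf p0 (- t)).
Proof.
move=> mgft_gt0 mgfNt_gt0.
by apply: ln_midpoint_le (mgf0_gt0 mgft_gt0) mgft_gt0 mgfNt_gt0 (mgf_cosh_bound t).
Qed.

End MomentGeneratingFunction.

Lemma log_partition_scale_expR_gt0 {R : realType} (p0 : {measure set R -> \bar R})
    (K lam : R) :
  (forall t : R, p0.-integrable setT (fun x => (expR (t * x))%:E)) ->
  K != 0 -> lam != 0 ->
  (forall x, log_partition p0 x = K * (expR (lam * x) - 1)) -> 0 < K.
Proof.
move=> mgf_int K0 lam0 PhiE.
have Phi_neq0 (s : R) : s != 0 -> log_partition p0 s != 0.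
  move=> s0; rewrite PhiE mulf_neq0 // subr_eq0 -expR0 (inj_eq (@expR_inj R)).
  by rewrite mulf_neq0.
have N10 : (-1 : R) != 0 by rewrite oppr_eq0 oner_neq0.
have : 2 * log_partition p0 0 <= log_partition p0 1 + log_partition p0 (-1).
  exact: ln_mgf_midpoint mgf_int _ (mgf_gt0 p0 (Phi_neq0 _ (oner_neq0 R)))
    (mgf_gt0 p0 (Phi_neq0 _ N10)).
rewrite !PhiE mulr0 expR0 subrr !mulr0 mulr1 mulrN1 -mulrDr.
have := expR_gt1Dx lam0; have := @expR_gt1Dx _ (- lam); rewrite oppr_eq0 lam0.
move=> /(_ isT) ltN lt; rewrite pmulr_lge0; last by lra.
by rewrite lt_neqAle eq_sym K0.
Qed.

Lemma scale_expR_separable {R : realType} (n : nat) (a b : R) :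
  exists f h : R -> R, [/\ smooth_fun f, smooth_fun h &
    forall (u : R) (w : 'I_n -> R), h u * (\sum_(j < n) f (w j))
      = \sum_(j < n) derive1 (fun x => expR (a * x + b) - expR b) (u + w j)].
Proof.
have PhiD (x : R) :
    is_derive x 1 (fun y => expR (a * y + b) - expR b) (expR b * a * expR (a * x)).
  have dexp := is_derive_scale_expR (expR b) a x.
  by apply: trigger_derive; rewrite /GRing.scale /= expRD; ring.
exists (fun x => 1 * expR (a * x)), (fun x => expR b * a * expR (a * x)).
split; [exact: smooth_scale_expR | exact: smooth_scale_expR|] => u w.
rewrite mulr_sumr; apply: eq_bigr => j _.
by rewrite (derive1_val (PhiD _)) mulrDr expRD; ring.
Qed.

Theorem mainTheorem3 (R : realType) (p0 : {measure set R -> \bar R})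
  (Phi : R -> R) (n : nat) :
  (0 < n)%N ->
  (forall alpha : R, p0.-integrable setT (fun x => (expR (alpha * x))%:E)) ->
  (forall alpha : R, Phi alpha = log_partition p0 alpha) ->
  Phi 0 = 0 ->
  smooth_fun Phi ->
  derive1n 2 Phi 0 != 0 ->
  ((exists f h : R -> R, smooth_fun f /\ smooth_fun h /\
      forall (u : R) (w : 'I_n -> R),
        h u * (\sum_(j < n) f (w j)) = \sum_(j < n) derive1 Phi (u + w j))
   <->
   (exists a b : R, forall alpha : R, Phi alpha = expR (a * alpha + b) - expR b)).
Proof.
move=> n_gt0 mgf_int PhiE Phi0 sPhi d2Phi0; split.
- move=> [f [h [_ [_ /(sum_separable_eq n_gt0) sepE]]]].
  have [K [lam [K0 lam0 PhiKE]]] := separable_scale_expR sPhi d2Phi0 Phi0 sepE.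
  have K_gt0 : 0 < K.
    by apply: log_partition_scale_expR_gt0 mgf_int K0 lam0 _ => x; rewrite -PhiE.
  exists lam, (ln K) => alpha.
  by rewrite PhiKE expRD lnK ?posrE //; ring.
- move=> [a [b PhiabE]].
  have {}PhiabE : Phi = fun x => expR (a * x + b) - expR b := funext PhiabE.
  have [f [h [sf sh sepE]]] := scale_expR_separable n a b.
  by exists f, h; rewrite PhiabE.
Qed.
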